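(* Let $S$ be a simple $(l,r)$-framed algebra. Let $\alpha_1,\alpha_2\in C_S$, $(d,c)\in I_S$, $a_1\in S_{(0,\alpha_1)}$, $a_2\in S_{(0,\alpha_2)}$ and $v\in S_{(d,c)}$. Then $a_2\cdot(a_1\cdot v)=(-1)^{|\alpha_1\alpha_2|}a_1\cdot(a_2\cdot v)$ and $a_1\cdot(a_2\cdot v)=(a_1\cdot a_2)\cdot v$. In particular $A_S(0)=\bigoplus_{\alpha}S_{(0,\alpha)}$ is an associative algebra and $S$ is an $A_S(0)$-module.
   Context: Let $\mathrm{IS}=\{0,\frac12,\frac1{16}\}$ with fusion rule $\star$ (values are subsets): $0\star h=h\star0=\{h\}$, $\frac12\star\frac12=\{0\}$, $\frac12\star\frac1{16}=\frac1{16}\star\frac12=\{\frac1{16}\}$, $\frac1{16}\star\frac1{16}=\{0,\frac12\}$; $A(h_0,h_1,h_2,h_3)=\{h: h\in h_2\star h_3,\ h_0\in h_1\star h\}$. For $h\in A(h_0,h_1,h_2,h_3)$, $h'\in A(h_0,h_2,h_1,h_3)$ define $B^{h,h'}_{h_0,h_1,h_2,h_3}$: $B_{*,0,*,*}=B_{*,*,0,*}=1$; $B_{*,\frac12,\frac12,*}=-1$; $B_{a,\frac12,\frac1{16},a'}=B_{a,\frac1{16},\frac12,a'}=i$ if $a$ or $a'$ is $\frac12$, else $-i$; $B^{b,b'}_{a,\frac1{16},\frac1{16},a'}=e^{-\pi i/8}\cdot\{1$ if $a,a'\ne\frac1{16},a=a'$; $i$ if $a,a'\neq\frac1{16},a\ne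 a'$; $\frac{1+i}2$ if $a=a'=\frac1{16},b=b'$; $\frac{1-i}2$ if $a=a'=\frac1{16},b\neq b'\}$. $\mathrm{IS}^{(l,r)}=\mathrm{IS}^l\times\mathrm{IS}^r$, $\lambda=(h_1,..,h_l,\bar h_1,..,\bar h_r)$, $s(\lambda)=\sum h_i-\sum\bar h_j$; $\star$, $A$ componentwise; $B^{\lambda,\lambda'}_{\lambda^0,\dots,\lambda^3}=\prod_{i\le l}B^{h_i,h'_i}_{h^0_i,\dots,h^3_i}\prod_{j\le r}\overline{B^{\bar h_j,\bar h'_j}_{\bar h^0_j,\dots,\bar h^3_j}}$. An $(l,r)$-framed algebra: finite-dimensional $\mathrm{IS}^{(l,r)}$-graded $S=\bigoplus S_\lambda$ over $\mathbb{C}$ with bilinear product, nonzero $1\in S_0$, $a\cdot_\lambda b$ the $S_\lambda$-component of $a\cdot b$, satisfying (FA1) $S_\lambda=0$ unless $s(\lambda)\in\mathbb{Z}$; (FA2) $S_0=\mathbb{C}1$, $1$ a two-sided unit; (FA3) $S_{\lambda^1}\cdot S_{\lambda^2}\subset\bigoplus_{\lambda\in\lambda^1\star\lambda^2}S_\lambda$; (FA4) $a_2\cdot_{\lambda^0}(a_1\cdot_{\lambda'}a_3)=\sum_{\lambda\in A(\lambda^0,\lambda^1,\lambda^2,\lambda^3)}B^{\lambda,\lambda'}_{\lambda^0,\lambda^1,\lambda^2,\lambda^3}a_1\cdot_{\lambda^0}(a_2\cdot_\lambda a_3)$ for $a_i\in S_{\lambda^i}$, $\lambda'\in A(\lambda^0,\lambda^2,\lambda^1,\lambda^3)$.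 Ideal: graded subspace $M$ with $S\cdot M\subset M$; simple: only ideals $0$ and $S$. Identify $\mathrm{IS}$ with $\{(d,c)\in\mathbb{Z}_2^2:dc=0\}$ via $0\leftrightarrow(0,0)$, $\frac12\leftrightarrow(0,1)$, $\frac1{16}\leftrightarrow(1,0)$, and componentwise $\mathrm{IS}^{(l,r)}$ with pairs $(d,c)\in(\mathbb{Z}_2^{l+r})^2$, $dc=0$. For $c\in\mathbb{Z}_2^{l+r}$, $|c|=|c|_l-|c|_r$ where $|c|_l,|c|_r$ count ones in the first $l$ and last $r$ coordinates. $C_S=\{\alpha:S_{(0,\alpha)}\ne0\}$, $I_S=\{(d,c):S_{(d,c)}\ne0\}$. *)

From HB Require Import structures.
From mathcomp Require Import all_boot all_order all_algebra.
From mathcomp Require Import Rstruct complex.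
From Stdlib Require Rtrigo_def Rtrigo1.
Set Implicit Arguments. Unset Strict Implicit. Unset Printing Implicit Defensive.
Import Order.TTheory GRing.Theory Num.Theory.
Local Open Scope ring_scope.

Definition CC : numClosedFieldType := complex Rdefinitions.R.

(* e^{-pi i/8} = cos(pi/8) - i sin(pi/8) *)
Definition zeta8 : CC :=
  @Complex Rdefinitions.R (Rtrigo_def.cos (Rtrigo1.PI / 8%:R))
                          (- Rtrigo_def.sin (Rtrigo1.PI / 8%:R)).

Inductive IS := IS0 | IShalf | IS16.

Definition IS_to_ord (h : IS) : 'I_3 :=
  match h with IS0 => inord 0 | IShalf => inord 1 | IS16 => inord 2 end.
Definition ord_to_IS (i : 'I_3) : IS :=
  match val i with 0 => IS0 | 1 => IShalf | _ => IS16 end.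
Lemma IS_ordK : cancel IS_to_ord ord_to_IS.
Proof. by case; rewrite /ord_to_IS /= inordK. Qed.
HB.instance Definition _ := Finite.copy IS (can_type IS_ordK).

Definition ISweight (h : IS) : rat :=
  match h with IS0 => 0 | IShalf => 2^-1 | IS16 => 16%:R^-1 end.

(* fusion rule: fus h1 h2 h  <=>  h \in h1 * h2 *)
Definition fus (h1 h2 h : IS) : bool :=
  match h1, h2 with
  | IS0, _ => h == h2
  | _, IS0 => h == h1
  | IShalf, IShalf => h == IS0
  | IShalf, IS16 | IS16, IShalf => h == IS16
  | IS16, IS16 => (h == IS0) || (h == IShalf)
  end.

Definition Aset (h0 h1 h2 h3 h : IS) : bool := fus h2 h3 h && fus h1 h h0.

Definition Bcoef (h0 h1 h2 h3 h h' : IS) : CC :=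
  match h1, h2 with
  | IS0, _ | _, IS0 => 1
  | IShalf, IShalf => -1
  | IShalf, IS16 | IS16, IShalf =>
      if (h0 == IShalf) || (h3 == IShalf) then 'i else - 'i
  | IS16, IS16 =>
      zeta8 *
      (if (h0 != IS16) && (h3 != IS16) then
         (if h0 == h3 then 1 else 'i)
       else if (h0 == IS16) && (h3 == IS16) then
         (if h == h' then (1 + 'i) / 2%:R else (1 - 'i) / 2%:R)
       else 0 (* never occurs: A(...) is empty in this case *))
  end.

Definition grade (l r : nat) : finType :=
  ({ffun 'I_l -> IS} * {ffun 'I_r -> IS})%type.

Definition gzero l r : grade l r := ([ffun=> IS0], [ffun=> IS0]).

Definition gweight l r (la : grade l r) : rat :=
  \sum_(i < l) ISweight (la.1 i) - \sum_(j < r) ISweight (la.2 j).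

Definition gfus l r (la1 la2 la : grade l r) : bool :=
  [forall i, fus (la1.1 i) (la2.1 i) (la.1 i)] &&
  [forall j, fus (la1.2 j) (la2.2 j) (la.2 j)].

Definition gA l r (la0 la1 la2 la3 la : grade l r) : bool :=
  [forall i, Aset (la0.1 i) (la1.1 i) (la2.1 i) (la3.1 i) (la.1 i)] &&
  [forall j, Aset (la0.2 j) (la1.2 j) (la2.2 j) (la3.2 j) (la.2 j)].

Definition gB l r (la0 la1 la2 la3 la la' : grade l r) : CC :=
  (\prod_(i < l) Bcoef (la0.1 i) (la1.1 i) (la2.1 i) (la3.1 i) (la.1 i) (la'.1 i))
  * (\prod_(j < r) (Bcoef (la0.2 j) (la1.2 j) (la2.2 j) (la3.2 j) (la.2 j) (la'.2 j))^*).

(* The identification IS = {(d,c) in Z2^2 | dc = 0}, componentwise.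
   A vector in Z2^{l+r} is a pair (first l coordinates, last r ones). *)
Definition Z2vec (l r : nat) : finType :=
  ({ffun 'I_l -> bool} * {ffun 'I_r -> bool})%type.

Definition IS_of_dc (d c : bool) : IS :=
  match d, c with
  | false, false => IS0
  | false, true => IShalf
  | true, false => IS16
  | true, true => IS0 (* excluded by dc = 0 *)
  end.

Definition dc_ok l r (d c : Z2vec l r) : bool :=
  [forall i, ~~ (d.1 i && c.1 i)] && [forall j, ~~ (d.2 j && c.2 j)].

Definition grade_of l r (d c : Z2vec l r) : grade l r :=
  ([ffun i => IS_of_dc (d.1 i) (c.1 i)], [ffun j => IS_of_dc (d.2 j) (c.2 j)]).

Definition z2zero l r : Z2vec l r := ([ffun=> false], [ffun=> false]).

Definition z2mul l r (a b : Z2vec l r) : Z2vec l r :=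
  ([ffun i => a.1 i && b.1 i], [ffun j => a.2 j && b.2 j]).

Definition z2norm l r (c : Z2vec l r) : int :=
  (#|[pred i | c.1 i]|%:Z - #|[pred j | c.2 j]|%:Z)%R.

(* A finite-dimensional IS^{(l,r)}-graded space
   S = (+)_la S_la is given by a finite-dimensional C-vector space V
   together with the family of projections  pi la : V -> V  onto the
   homogeneous components (linear, idempotent, mutually annihilating,
   summing to the identity).  S_la is the image of pi la.  The product
   is a bilinear map mul, and  a ._la b := pi la (mul a b).          *)

Definition is_grading l r (V : vectType CC) (pi : grade l r -> V -> V) : Prop :=
  [/\ forall la, linear (pi la),
      forall la x, pi la (pi la x) = pi la x,
      forall la mu x, la != mu -> pi la (pi mu x) = 0
    & forall x, x = \sum_la pi la x].

Definition homog l r (V : vectType CC) (pi : grade l r -> V -> V)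
  (la : grade l r) (x : V) : Prop := pi la x = x.

Definition is_framed_algebra l r (V : vectType CC)
  (pi : grade l r -> V -> V) (mul : V -> V -> V) (one : V) : Prop :=
  [/\ is_grading pi /\
      ((forall a, linear (mul a)) /\ (forall b, linear (mul^~ b))),
      (forall la x, ~~ (gweight la \is a Num.int) -> pi la x = 0),
      [/\ one != 0, homog pi (gzero l r) one,
          (forall x, homog pi (gzero l r) x -> exists k : CC, x = k *: one)
        & forall x, mul one x = x /\ mul x one = x],
      (forall la1 la2 la a1 a2, homog pi la1 a1 -> homog pi la2 a2 ->
         ~~ gfus la1 la2 la -> pi la (mul a1 a2) = 0)
    &
      (forall la0 la1 la2 la3 la' a1 a2 a3,
         homog pi la1 a1 -> homog pi la2 a2 -> homog pi la3 a3 ->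
         gA la0 la2 la1 la3 la' ->
         pi la0 (mul a2 (pi la' (mul a1 a3))) =
         \sum_(la | gA la0 la1 la2 la3 la)
            gB la0 la1 la2 la3 la la' *: pi la0 (mul a1 (pi la (mul a2 a3))))].

Definition is_ideal l r (V : vectType CC) (pi : grade l r -> V -> V)
  (mul : V -> V -> V) (M : {vspace V}) : Prop :=
  (forall la x, x \in M -> pi la x \in M) /\
  (forall a x, x \in M -> mul a x \in M).

Definition simple_fa l r (V : vectType CC) (pi : grade l r -> V -> V)
  (mul : V -> V -> V) : Prop :=
  forall M : {vspace V}, is_ideal pi mul M -> M = 0%VS \/ M = fullv.

Definition nonzero_comp l r (V : vectType CC) (pi : grade l r -> V -> V)
  (la : grade l r) : Prop := exists x, homog pi la x /\ x != 0.

Definition in_CS l r (V : vectType CC) (pi : grade l r -> V -> V)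
  (al : Z2vec l r) : Prop := nonzero_comp pi (grade_of (z2zero l r) al).
Definition in_IS l r (V : vectType CC) (pi : grade l r -> V -> V)
  (d c : Z2vec l r) : Prop := dc_ok d c /\ nonzero_comp pi (grade_of d c).

Definition in_AS0 l r (V : vectType CC) (pi : grade l r -> V -> V) (x : V) : Prop :=
  x = \sum_(al : Z2vec l r) pi (grade_of (z2zero l r) al) x.

From HB Require Import structures.
From mathcomp Require Import all_boot all_order all_algebra.
From mathcomp Require Import Rstruct complex.
From mathcomp Require Import ring.
From Stdlib Require Import FunctionalExtensionality.
Import GRing.Theory Num.Theory.
Set Implicit Arguments. Unset Strict Implicit. Unset Printing Implicit Defensive.
Local Open Scope ring_scope.

(* The components S_(0,alpha) are simple currents: in every coordinate fusion
   with 0 or 1/2 has a single outcome, so every A-set met below is a singleton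
   and FA4 becomes an exact exchange relation  x (y z) = B . y (x z).  Taking
   z = 1 gives skew-commutativity, and for two currents B is the sign
   (-1)^|alpha1 alpha2|.  Associativity comes from the chain of exchanges
   (a1 a2) v -> v (a1 a2) -> a1 (v a2) -> a1 (a2 v); coordinatewise, the
   product of these coefficients differs from 1 exactly by the product P of
   the two skew coefficients of a1 against v a2, and skewing twice shows that
   P fixes a1 (v a2). *)

Section LinearFunction.
Variables (R : pzRingType) (U W : lmodType R) (f : U -> W).
Hypothesis f_lin : linear f.

Let f_linear : {linear U -> W} :=
  HB.pack f (GRing.isLinear.Build R U W *:%R f f_lin).

Lemma linear_fun_sum I (s : seq I) (P : pred I) (F : I -> U) :
  f (\sum_(i <- s | P i) F i) = \sum_(i <- s | P i) f (F i).
Proof. exact: (linear_sum f_linear). Qed.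

Lemma linear_funZ a x : f (a *: x) = a *: f x.
Proof. exact: (linearZZ f_linear). Qed.

End LinearFunction.

Lemma prodr_mul_eq (R : comPzSemiRingType) (I : finType) (f1 f2 f3 f4 f5 : I -> R) :
  (forall i, f1 i * f2 i = f3 i * (f4 i * f5 i)) ->
  (\prod_i f1 i) * (\prod_i f2 i) = (\prod_i f3 i) * ((\prod_i f4 i) * (\prod_i f5 i)).
Proof. by move=> E; rewrite -!big_split; apply: eq_bigr => i _; exact: E. Qed.

Definition IS_eqb (x y : IS) : bool :=
  match x, y with IS0, IS0 | IShalf, IShalf | IS16, IS16 => true | _, _ => false end.

(* The equality of IS is inherited from 'I_3 and does not compute by [simpl]. *)
Lemma IS_eqE x y : (x == y) = IS_eqb x y.
Proof. by case: x; case: y => /=; rewrite ?eqxx //; apply/eqP. Qed.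

Ltac IS_compute := rewrite /Aset /fus /= ?IS_eqE.

(* [cur b] is one coordinate of the simple current (0, b); fusion with it has
   the single outcome [cur_fuse b h]. *)
Definition cur (b : bool) : IS := if b then IShalf else IS0.

Definition cur_fuse (b : bool) (h : IS) : IS :=
  if b then match h with IS0 => IShalf | IShalf => IS0 | IS16 => IS16 end else h.

Lemma cur_fuseC x y g : cur_fuse x (cur_fuse y g) = cur_fuse y (cur_fuse x g).
Proof. by case: x; case: y; case: g. Qed.

Lemma cur_fuseA x y g : cur_fuse x (cur_fuse y g) = cur_fuse (x (+) y) g.
Proof. by case: x; case: y; case: g. Qed.

Lemma cur_fuse_cur x y : cur_fuse x (cur y) = cur (x (+) y).
Proof. by case: x; case: y. Qed.

Lemma fus_curl b g h : fus (cur b) g h = (h == cur_fuse b g).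
Proof. by case: b; case: g; case: h; IS_compute. Qed.

Lemma fus_curr b g h : fus g (cur b) h = (h == cur_fuse b g).
Proof. by case: b; case: g; case: h; IS_compute. Qed.

Lemma Aset_unit_curl b g h : Aset (cur_fuse b g) (cur b) g IS0 h = (h == g).
Proof. by case: b; case: g; case: h; IS_compute. Qed.

Lemma Aset_unit_curr b g h : Aset (cur_fuse b g) g (cur b) IS0 h = (h == cur b).
Proof. by case: b; case: g; case: h; IS_compute. Qed.

Lemma Aset_cur_cur x y g h :
  Aset (cur_fuse x (cur_fuse y g)) (cur x) (cur y) g h = (h == cur_fuse y g).
Proof. by case: x; case: y; case: g; case: h; IS_compute. Qed.

Lemma Aset_cur_out x y g h :
  Aset (cur_fuse (x (+) y) g) g (cur x) (cur y) h = (h == cur (x (+) y)).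
Proof. by case: x; case: y; case: g; case: h; IS_compute. Qed.

Lemma Aset_cur_in x y g h :
  Aset (cur_fuse (x (+) y) g) (cur x) g (cur y) h = (h == cur_fuse y g).
Proof. by case: x; case: y; case: g; case: h; IS_compute. Qed.

Lemma Bcoef_cur_cur x y h0 h3 h h' :
  Bcoef h0 (cur x) (cur y) h3 h h' = if x && y then -1 else 1.
Proof. by case: x; case: y. Qed.

Lemma Bcoef_assoc x y z g g' : z = x (+) y -> g' = cur_fuse y g ->
  Bcoef (cur_fuse z g) g (cur z) IS0 (cur z) g *
    Bcoef (cur_fuse z g) (cur x) g (cur y) g' (cur z)
  = Bcoef g' g (cur y) IS0 (cur y) g *
    (Bcoef (cur_fuse x g') g' (cur x) IS0 (cur x) g' *
     Bcoef (cur_fuse x g') (cur x) g' IS0 g' (cur x)).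
Proof.
move=> -> ->; have ii : 'i * 'i = -1 :> CC by rewrite -expr2 sqrCi.
by case: x; case: y; case: g; IS_compute;
  rewrite /= ?(mulNr, mulrN, mul1r, mulr1, opprK, ii).
Qed.

Notation gcur al := (grade_of (z2zero _ _) al).

Definition gcur_fuse l r (al : Z2vec l r) (la : grade l r) : grade l r :=
  ([ffun i => cur_fuse (al.1 i) (la.1 i)], [ffun j => cur_fuse (al.2 j) (la.2 j)]).

Definition z2add l r (a b : Z2vec l r) : Z2vec l r :=
  ([ffun i => a.1 i (+) b.1 i], [ffun j => a.2 j (+) b.2 j]).

Section GradeCoordinates.
Variables l r : nat.
Implicit Types (al be : Z2vec l r) (la mu : grade l r).

Lemma eq_grade la mu :
  (forall i, la.1 i = mu.1 i) -> (forall j, la.2 j = mu.2 j) -> la = mu.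
Proof. by case: la mu => [f g] [f' g'] /= E1 E2; congr pair; apply/ffunP. Qed.

Lemma gcur1 al i : (gcur al).1 i = cur (al.1 i).
Proof. by rewrite !ffunE; case: (al.1 i). Qed.
Lemma gcur2 al j : (gcur al).2 j = cur (al.2 j).
Proof. by rewrite !ffunE; case: (al.2 j). Qed.
Lemma gcur_fuse1 al la i : (gcur_fuse al la).1 i = cur_fuse (al.1 i) (la.1 i).
Proof. by rewrite ffunE. Qed.
Lemma gcur_fuse2 al la j : (gcur_fuse al la).2 j = cur_fuse (al.2 j) (la.2 j).
Proof. by rewrite ffunE. Qed.
Lemma z2add1 al be i : (z2add al be).1 i = al.1 i (+) be.1 i.
Proof. by rewrite ffunE. Qed.
Lemma z2add2 al be j : (z2add al be).2 j = al.2 j (+) be.2 j.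
Proof. by rewrite ffunE. Qed.
Lemma z2mul1 al be i : (z2mul al be).1 i = al.1 i && be.1 i. Proof. by rewrite ffunE. Qed.
Lemma z2mul2 al be j : (z2mul al be).2 j = al.2 j && be.2 j. Proof. by rewrite ffunE. Qed.
Lemma gzero1 i : (gzero l r).1 i = IS0. Proof. by rewrite ffunE. Qed.
Lemma gzero2 j : (gzero l r).2 j = IS0. Proof. by rewrite ffunE. Qed.

End GradeCoordinates.

Ltac gsimpl := rewrite ?(gcur1, gcur2, gcur_fuse1, gcur_fuse2, z2add1, z2add2,
                         z2mul1, z2mul2, gzero1, gzero2).

Lemma gcur_fuseC l r (al be : Z2vec l r) la :
  gcur_fuse al (gcur_fuse be la) = gcur_fuse be (gcur_fuse al la).
Proof. by apply: eq_grade => i; gsimpl; rewrite cur_fuseC. Qed.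

Lemma gcur_fuseA l r (al be : Z2vec l r) la :
  gcur_fuse al (gcur_fuse be la) = gcur_fuse (z2add al be) la.
Proof. by apply: eq_grade => i; gsimpl; rewrite cur_fuseA. Qed.

Lemma gcur_fuse_cur l r (al be : Z2vec l r) :
  gcur_fuse al (gcur be) = gcur (z2add al be).
Proof. by apply: eq_grade => i; gsimpl; rewrite cur_fuse_cur. Qed.

Lemma gcur_inj l r : injective (fun al : Z2vec l r => gcur al).
Proof.
move=> [f g] [f' g'] E; congr pair; apply/ffunP => i.
- by move: (congr1 (fun la : grade l r => la.1 i) E) => /=; rewrite !ffunE;
    case: (f i); case: (f' i).
- by move: (congr1 (fun la : grade l r => la.2 i) E) => /=; rewrite !ffunE;
    case: (g i); case: (g' i).
Qed.

Lemma grade_forall_eq l r (P1 : 'I_l -> IS -> bool) (P2 : 'I_r -> IS -> bool)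
    (mu : grade l r) :
  (forall i h, P1 i h = (h == mu.1 i)) -> (forall j h, P2 j h = (h == mu.2 j)) ->
  forall la : grade l r,
    [forall i, P1 i (la.1 i)] && [forall j, P2 j (la.2 j)] = (la == mu).
Proof.
move=> E1 E2 la; rewrite (eq_forallb (fun i => E1 i _)) (eq_forallb (fun j => E2 j _)).
case: la mu {E1 E2} => f g [f' g'] /=; rewrite xpair_eqE.
by congr andb; apply/forallP/eqP => [E|-> //]; apply/ffunP => i; apply/eqP.
Qed.

Lemma gA_pred1 l r (la0 la1 la2 la3 mu : grade l r) :
  (forall i h, Aset (la0.1 i) (la1.1 i) (la2.1 i) (la3.1 i) h = (h == mu.1 i)) ->
  (forall j h, Aset (la0.2 j) (la1.2 j) (la2.2 j) (la3.2 j) h = (h == mu.2 j)) ->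
  gA la0 la1 la2 la3 =1 pred1 mu.
Proof. by move=> E1 E2 la; apply: (grade_forall_eq E1 E2). Qed.

Lemma gfus_pred1 l r (la1 la2 mu : grade l r) :
  (forall i h, fus (la1.1 i) (la2.1 i) h = (h == mu.1 i)) ->
  (forall j h, fus (la1.2 j) (la2.2 j) h = (h == mu.2 j)) ->
  gfus la1 la2 =1 pred1 mu.
Proof. by move=> E1 E2 la; apply: (grade_forall_eq E1 E2). Qed.

Lemma gfus_curl l r (al : Z2vec l r) la :
  gfus (gcur al) la =1 pred1 (gcur_fuse al la).
Proof. by apply: gfus_pred1 => i h; gsimpl; rewrite fus_curl. Qed.

Lemma gfus_curr l r (al : Z2vec l r) la :
  gfus la (gcur al) =1 pred1 (gcur_fuse al la).
Proof. by apply: gfus_pred1 => i h; gsimpl; rewrite fus_curr. Qed.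

Lemma gB_cur_cur l r (x y : Z2vec l r) la0 la3 la la' :
  gB la0 (gcur x) (gcur y) la3 la la' = (-1) ^ z2norm (z2mul x y).
Proof.
have sign n (b : 'I_n -> bool) :
    \prod_(i < n) (if b i then -1 else 1) = (-1) ^+ #|[pred i | b i]| :> CC.
  by rewrite -prodr_const [RHS]big_mkcond.
rewrite /gB (eq_bigr (fun i => if (z2mul x y).1 i then -1 else 1)); last first.
  by move=> i _; gsimpl; rewrite Bcoef_cur_cur.
rewrite (eq_bigr (fun j => if (z2mul x y).2 j then -1 else 1)); last first.
  by move=> j _; gsimpl; rewrite Bcoef_cur_cur; case: ifP; rewrite ?conjCN1 ?conjC1.
rewrite !sign /z2norm expfzDr ?oppr_eq0 ?oner_eq0 //.
by rewrite -exprnN invr_sign.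
Qed.

Lemma gB_assoc l r (x y z : Z2vec l r) la mu :
  z = z2add x y -> mu = gcur_fuse y la ->
  gB (gcur_fuse z la) la (gcur z) (gzero l r) (gcur z) la *
    gB (gcur_fuse z la) (gcur x) la (gcur y) mu (gcur z)
  = gB mu la (gcur y) (gzero l r) (gcur y) la *
    (gB (gcur_fuse x mu) mu (gcur x) (gzero l r) (gcur x) mu *
     gB (gcur_fuse x mu) (gcur x) mu (gzero l r) mu (gcur x)).
Proof.
move=> -> ->; rewrite /gB.
have split_lr (L1 L2 L3 L4 L5 R1 R2 R3 R4 R5 : CC) :
    L1 * L2 = L3 * (L4 * L5) -> R1 * R2 = R3 * (R4 * R5) ->
    (L1 * R1) * (L2 * R2) = (L3 * R3) * ((L4 * R4) * (L5 * R5)).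
  by move=> EL ER; rewrite mulrACA EL ER; ring.
apply: split_lr; apply: prodr_mul_eq => i; rewrite -?rmorphM; gsimpl.
  exact: Bcoef_assoc.
by rewrite Bcoef_assoc.
Qed.

Section FramedAlgebra.
Variables (l r : nat) (V : vectType CC) (pi : grade l r -> V -> V).
Variables (mul : V -> V -> V) (one : V).
Hypothesis S_framed : is_framed_algebra pi mul one.

Let grading : is_grading pi.
Proof. by case: S_framed => [[]]. Qed.

Let pi_linear la : linear (pi la).
Proof. by case: grading. Qed.

Let pi_homog la x : homog pi la (pi la x).
Proof. by case: grading => _ pi_idem _ _; apply: pi_idem. Qed.

Let pi_decomp x : x = \sum_la pi la x.
Proof. by case: grading. Qed.

Let mul_linearr a : linear (mul a).
Proof. by case: S_framed => [[_ []]]. Qed.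

Let mul_linearl b : linear (mul^~ b).
Proof. by case: S_framed => [[_ []]]. Qed.

Lemma mul_sumr I (s : seq I) (P : pred I) (F : I -> V) w :
  mul w (\sum_(i <- s | P i) F i) = \sum_(i <- s | P i) mul w (F i).
Proof. exact: linear_fun_sum. Qed.

Lemma mul_suml I (s : seq I) (P : pred I) (F : I -> V) w :
  mul (\sum_(i <- s | P i) F i) w = \sum_(i <- s | P i) mul (F i) w.
Proof. exact: (linear_fun_sum (mul_linearl w)). Qed.

Lemma homog_pi_eq0 la mu x : homog pi la x -> mu != la -> pi mu x = 0.
Proof. by case: grading => _ _ pi_orth _ <- /pi_orth. Qed.

Lemma pi_eq0_homog la x : (forall mu, mu != la -> pi mu x = 0) -> homog pi la x.
Proof.
move=> pi_x0; rewrite /homog {2}(pi_decomp x) (bigD1 la) //=.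
by rewrite big1 ?addr0.
Qed.

Lemma mul_cur_homogl al la a w : homog pi (gcur al) a -> homog pi la w ->
  homog pi (gcur_fuse al la) (mul a w).
Proof.
case: S_framed => _ _ _ FA3 _ Ha Hw; apply: pi_eq0_homog => mu mu_neq.
by apply: (FA3 _ _ _ _ _ Ha Hw); rewrite gfus_curl.
Qed.

Lemma mul_cur_homogr al la a w : homog pi (gcur al) a -> homog pi la w ->
  homog pi (gcur_fuse al la) (mul w a).
Proof.
case: S_framed => _ _ _ FA3 _ Ha Hw; apply: pi_eq0_homog => mu mu_neq.
by apply: (FA3 _ _ _ _ _ Hw Ha); rewrite gfus_curr.
Qed.

Lemma mul_exchange1 la0 la1 la2 la3 la la' a1 a2 a3 :
  homog pi la1 a1 -> homog pi la2 a2 -> homog pi la3 a3 ->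
  gA la0 la2 la1 la3 =1 pred1 la' -> gA la0 la1 la2 la3 =1 pred1 la ->
  homog pi la' (mul a1 a3) -> homog pi la (mul a2 a3) ->
  homog pi la0 (mul a2 (mul a1 a3)) -> homog pi la0 (mul a1 (mul a2 a3)) ->
  mul a2 (mul a1 a3) = gB la0 la1 la2 la3 la la' *: mul a1 (mul a2 a3).
Proof.
case: S_framed => _ _ _ _ FA4 H1 H2 H3 A' A H13 H23 H213 H123.
have A'_la' : gA la0 la2 la1 la3 la' by rewrite A' /= eqxx.
have := FA4 la0 la1 la2 la3 la' a1 a2 a3 H1 H2 H3 A'_la'.
by rewrite H13 H213 (big_pred1 la A) H23 H123.
Qed.

Lemma mul_skew la0 la1 la2 a1 a2 : homog pi la1 a1 -> homog pi la2 a2 ->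
  gA la0 la2 la1 (gzero l r) =1 pred1 la1 ->
  gA la0 la1 la2 (gzero l r) =1 pred1 la2 ->
  homog pi la0 (mul a2 a1) -> homog pi la0 (mul a1 a2) ->
  mul a2 a1 = gB la0 la1 la2 (gzero l r) la2 la1 *: mul a1 a2.
Proof.
case: S_framed => _ _ [_ one_homog _ unit] _ _ H1 H2 A' A H21 H12.
have [_ a1_one] := unit a1; have [_ a2_one] := unit a2.
by have := mul_exchange1 H1 H2 one_homog A' A; rewrite a1_one a2_one; apply.
Qed.

Lemma mul_cur_skew al la c w : homog pi (gcur al) c -> homog pi la w ->
  mul w c = gB (gcur_fuse al la) (gcur al) la (gzero l r) la (gcur al) *: mul c w /\
  mul c w = gB (gcur_fuse al la) la (gcur al) (gzero l r) (gcur al) la *: mul w c.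
Proof.
move=> Hc Hw.
have Hcw := mul_cur_homogl Hc Hw; have Hwc := mul_cur_homogr Hc Hw.
have A1 : gA (gcur_fuse al la) la (gcur al) (gzero l r) =1 pred1 (gcur al).
  by apply: gA_pred1 => i h; gsimpl; rewrite Aset_unit_curr.
have A2 : gA (gcur_fuse al la) (gcur al) la (gzero l r) =1 pred1 la.
  by apply: gA_pred1 => i h; gsimpl; rewrite Aset_unit_curl.
by split; apply: mul_skew.
Qed.

Lemma mul_cur_comm x y la a b v :
  homog pi (gcur x) a -> homog pi (gcur y) b -> homog pi la v ->
  mul b (mul a v) = (-1) ^ z2norm (z2mul x y) *: mul a (mul b v).
Proof.
move=> Ha Hb Hv.
rewrite -(gB_cur_cur x y (gcur_fuse y (gcur_fuse x la)) la
                     (gcur_fuse y la) (gcur_fuse x la)).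
apply: mul_exchange1 => //.
- by apply: gA_pred1 => i h; gsimpl; rewrite Aset_cur_cur.
- by apply: gA_pred1 => i h; gsimpl; rewrite cur_fuseC Aset_cur_cur.
- exact: mul_cur_homogl.
- exact: mul_cur_homogl.
- by apply: mul_cur_homogl => //; apply: mul_cur_homogl.
- by rewrite gcur_fuseC; apply: mul_cur_homogl => //; apply: mul_cur_homogl.
Qed.

Lemma mul_curA x y la a b v :
  homog pi (gcur x) a -> homog pi (gcur y) b -> homog pi la v ->
  mul a (mul b v) = mul (mul a b) v.
Proof.
move=> Ha Hb Hv; set z := z2add x y; set mu := gcur_fuse y la.
have Hab : homog pi (gcur z) (mul a b).
  by rewrite -gcur_fuse_cur; apply: mul_cur_homogl.
have Hvb : homog pi mu (mul v b) by apply: mul_cur_homogr.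
have [_ E_abv] := mul_cur_skew Hab Hv.
have [_ E_bv] := mul_cur_skew Hb Hv.
have [E_vba E_avb] := mul_cur_skew Ha Hvb.
have E_vab : mul v (mul a b) =
    gB (gcur_fuse z la) (gcur x) la (gcur y) mu (gcur z) *: mul a (mul v b).
  apply: mul_exchange1 => //.
  - by apply: gA_pred1 => i h; gsimpl; rewrite Aset_cur_out.
  - by apply: gA_pred1 => i h; gsimpl; rewrite Aset_cur_in.
  - exact: mul_cur_homogr.
  - by rewrite /z -gcur_fuseA; apply: mul_cur_homogl.
have avb_fixed := E_avb; rewrite E_vba scalerA in avb_fixed.
rewrite E_abv E_vab E_bv linear_funZ //.
by rewrite scalerA (gB_assoc erefl erefl) -scalerA -avb_fixed.
Qed.

Lemma in_AS0_homog al x : homog pi (gcur al) x -> in_AS0 pi x.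
Proof.
move=> Hx; rewrite /in_AS0 (bigD1 al) //= Hx big1 ?addr0 // => be be_neq.
by apply: homog_pi_eq0 Hx _; apply: contra be_neq => /eqP/gcur_inj ->.
Qed.

Lemma in_AS0_sum I (s : seq I) (F : I -> V) :
  (forall i, in_AS0 pi (F i)) -> in_AS0 pi (\sum_(i <- s) F i).
Proof.
move=> F_AS0; rewrite /in_AS0.
under [RHS]eq_bigr do rewrite linear_fun_sum //.
by rewrite exchange_big; apply: eq_bigr => i _; rewrite -F_AS0.
Qed.

Lemma mul_AS0_expand a b : in_AS0 pi a -> in_AS0 pi b ->
  mul a b = \sum_(al : Z2vec l r) \sum_(be : Z2vec l r)
              mul (pi (gcur al) a) (pi (gcur be) b).
Proof.
move=> Ha Hb; rewrite {1}Ha {1}Hb mul_suml.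
by apply: eq_bigr => al _; rewrite mul_sumr.
Qed.

Lemma in_AS0_mul a b : in_AS0 pi a -> in_AS0 pi b -> in_AS0 pi (mul a b).
Proof.
move=> Ha Hb; rewrite mul_AS0_expand //.
apply: in_AS0_sum => al; apply: in_AS0_sum => be.
apply: (@in_AS0_homog (z2add al be)).
by rewrite -gcur_fuse_cur; apply: mul_cur_homogl.
Qed.

Lemma mul_AS0A a b w : in_AS0 pi a -> in_AS0 pi b ->
  mul (mul a b) w = mul a (mul b w).
Proof.
move=> Ha Hb; rewrite (mul_AS0_expand Ha Hb) [in RHS]Ha [in RHS]Hb (pi_decomp w).
rewrite !mul_suml; apply: eq_bigr => al _.
rewrite mul_suml mul_sumr; apply: eq_bigr => be _.
rewrite !mul_sumr; apply: eq_bigr => la _.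
by rewrite (mul_curA (pi_homog _ _) (pi_homog _ _) (pi_homog _ _)).
Qed.

End FramedAlgebra.

Theorem mainTheorem6 (l r : nat) (V : vectType CC)
  (pi : grade l r -> V -> V) (mul : V -> V -> V) (one : V) :
  is_framed_algebra pi mul one ->
  simple_fa pi mul ->
  (forall (al1 al2 d c : Z2vec l r) (a1 a2 v : V),
     in_CS pi al1 -> in_CS pi al2 -> in_IS pi d c ->
     homog pi (grade_of (z2zero l r) al1) a1 ->
     homog pi (grade_of (z2zero l r) al2) a2 ->
     homog pi (grade_of d c) v ->
     mul a2 (mul a1 v) = ((-1) ^ z2norm (z2mul al1 al2)) *: mul a1 (mul a2 v)
     /\ mul a1 (mul a2 v) = mul (mul a1 a2) v)
  /\ (forall a b : V, in_AS0 pi a -> in_AS0 pi b ->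
        in_AS0 pi (mul a b) /\ mul (mul a b) = (fun v => mul a (mul b v))).
Proof.
move=> S_framed _; split.
  move=> al1 al2 d c a1 a2 v _ _ _ H1 H2 Hv.
  exact: conj (mul_cur_comm S_framed H1 H2 Hv) (mul_curA S_framed H1 H2 Hv).
move=> a b Ha Hb; split; first exact: (in_AS0_mul S_framed Ha Hb).
apply: functional_extensionality => w; exact: (mul_AS0A S_framed w Ha Hb).
Qed.
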